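(* Let $G$ be a finite group. Then the power graph $\mathscr{G}(G)$ is overfull if and only if $G$ is cyclic of order $p^a$ for some odd prime $p$ and integer $a \geq 1$.
   Context: For a finite group $G$, the power graph $\mathscr{G}(G)$ is the simple graph with vertex set the elements of $G$, in which two distinct elements $a,b$ are adjacent if and only if one is a power of the other. For a finite simple graph $\Gamma$ on $n$ vertices with maximum vertex degree $\Delta(\Gamma)$, $\Gamma$ is called overfull if $|E(\Gamma)| / \lfloor n/2 \rfloor > \Delta(\Gamma)$. *)

From mathcomp Require Import all_boot all_order all_fingroup.
Set Implicit Arguments. Unset Strict Implicit. Unset Printing Implicit Defensive.
Local Open Scope group_scope.

Section PowerGraph.
Variables (gT : finGroupType) (G : {group gT}).

Definition pg_adj (a b : gT) : bool :=
  [&& a \in G, b \in G, a != b & (a \in <[b]>) || (b \in <[a]>)].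

Definition pg_edges : {set {set gT}} :=
  [set [set a; b] | a in G, b in G & pg_adj a b].

Definition pg_deg (v : gT) : nat := #|[set b in G | pg_adj v b]|.

Definition pg_maxdeg : nat := \max_(v in G) pg_deg v.

(* overfull: |E| / floor(n/2) > Delta, written without division
   (for n = 1 the graph, having no edges, is not overfull) *)
Definition pg_overfull : bool := pg_maxdeg * (#|G| %/ 2) < #|pg_edges|.
End PowerGraph.

(* The identity is adjacent to every vertex, so Delta = n - 1; since there are
   at most 'C(n, 2) edges, the power graph is overfull exactly when n is odd
   and there are fewer than (n - 1)/2 non-edges.  In a non-cyclic group, an
   element x of maximal order is adjacent to no element outside <[x]>, which
   gives at least n/2 non-edges.  If two subgroups H and K meet trivially, no
   non-trivial element of H is a power of one of K, and conversely; for the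
   Hall p- and p'-subgroups of a cyclic group of odd order that is not a
   p-group this gives (|H| - 1)(|K| - 1) >= (n - 1)/2 non-edges.  Finally,
   the subgroups of a cyclic p-group form a chain, so its power graph is
   complete. *)

From mathcomp Require Import all_boot all_order all_fingroup all_solvable.
From mathcomp Require Import zify.
Set Implicit Arguments. Unset Strict Implicit. Unset Printing Implicit Defensive.

Lemma eq_set2 (T : finType) (a b c d : T) :
  [set a; b] = [set c; d] -> (a = c /\ b = d) \/ (a = d /\ b = c).
Proof.
move=> E.
have : a \in [set c; d] by rewrite -E set21.
have : b \in [set c; d] by rewrite -E set22.
have : c \in [set a; b] by rewrite E set21.
have : d \in [set a; b] by rewrite E set22.
by rewrite !inE => /orP[]/eqP-> /orP[]/eqP-> /orP[]/eqP ? /orP[]/eqP ?; subst; tauto.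
Qed.

Lemma odd_mul_pred_le a b : odd a -> odd b -> 1 < a -> 1 < b ->
  (a * b).-1 <= 2 * (a.-1 * b.-1).
Proof.
move=> oa ob /(odd_gt2 oa) a2 /(odd_gt2 ob) b2.
rewrite -(subnK a2) -(subnK b2); move: (a - 3) (b - 3) => x y; nia.
Qed.

Section PowerGraphCounting.
Variables (gT : finGroupType) (G : {group gT}).
Local Open Scope group_scope.

Definition pg_nonedges : {set {set gT}} :=
  [set A : {set gT} | A \subset G & #|A| == 2] :\: pg_edges G.

Lemma pg_adjC a b : pg_adj G a b = pg_adj G b a.
Proof. by rewrite /pg_adj andbCA eq_sym orbC. Qed.

Lemma mem_pg_edges a b : ([set a; b] \in pg_edges G) = pg_adj G a b.
Proof.
apply/idP/idP => [|adj].
  case/imset2P => a' b' _; rewrite inE => /andP[_ adj'].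
  by case/eq_set2 => -[-> ->]; rewrite // pg_adjC.
have /and3P[aG bG _] := adj.
by apply/imset2P; exists a b; rewrite // inE bG.
Qed.

Lemma card_pg_edges_nonedges :
  #|pg_edges G| + #|pg_nonedges| = 'C(#|G|, 2).
Proof.
rewrite -cards_draws -[RHS](cardsID (pg_edges G)) (setIidPr _) //.
apply/subsetP => A /imset2P[a b aG].
rewrite inE => /andP[bG /and4P[_ _ neq_ab _]] ->.
by rewrite inE cards2 neq_ab subUset !sub1set aG bG.
Qed.

Lemma mem_pg_nonedges a b : a \in G -> b \in G -> a != b ->
  ([set a; b] \in pg_nonedges) = ~~ pg_adj G a b.
Proof.
move=> aG bG neq_ab.
by rewrite !inE mem_pg_edges cards2 neq_ab subUset !sub1set aG bG /= andbT.
Qed.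

Lemma pg_maxdegE : pg_maxdeg G = #|G|.-1.
Proof.
apply/eqP; rewrite eqn_leq; apply/andP; split.
  apply/bigmax_leqP => v vG; rewrite /pg_deg (cardsD1 v G) vG.
  apply/subset_leq_card/subsetP => b.
  by rewrite !inE => /andP[bG /and4P[_ _ neq_vb _]]; rewrite eq_sym neq_vb.
apply: leq_trans (leq_bigmax_cond _ (group1 G)).
rewrite /pg_deg (cardsD1 1 G) group1.
apply/subset_leq_card/subsetP => b; rewrite !inE => /andP[neq_b1 bG].
by rewrite /pg_adj group1 bG eq_sym neq_b1 group1.
Qed.

Lemma pg_overfullE :
  pg_overfull G = odd #|G| && (2 * #|pg_nonedges| < #|G|.-1).
Proof.
rewrite /pg_overfull pg_maxdegE.
have := card_pg_edges_nonedges; rewrite bin2 -divn2.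
have := odd_double_half #|G|; rewrite -divn2 -muln2.
by case: (odd #|G|) => /=; nia.
Qed.

Lemma setX_nonedges (X Y : {set gT}) :
  [disjoint X & Y] -> X \subset G -> Y \subset G ->
  {in X & Y, forall a b, ~~ pg_adj G a b} ->
  #|X| * #|Y| <= #|pg_nonedges|.
Proof.
move=> disXY sXG sYG nadj.
have neqXY a b : a \in X -> b \in Y -> a != b.
  by move=> aX bY; apply: contraTneq bY => <-; rewrite (disjointFr disXY aX).
rewrite -cardsX -(card_in_imset (f := fun u => [set u.1; u.2])).
  apply/subset_leq_card/subsetP => _ /imsetP[[a b] /setXP[/= aX bY] ->].
  rewrite mem_pg_nonedges ?nadj ?neqXY //.
    exact: (subsetP sXG).
  exact: (subsetP sYG).
move=> [a b] [a' b'] /setXP[/= aX bY] /setXP[/= a'X b'Y].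
case/eq_set2 => -[ea eb]; first by rewrite ea eb.
by move: (neqXY _ _ aX b'Y); rewrite ea eqxx.
Qed.

Lemma noncyclic_nonedges : ~~ cyclic G -> #|G| <= 2 * #|pg_nonedges|.
Proof.
move=> ncycG.
have [x xG max_x] := @arg_maxnP _ 1 (mem G) (fun y => #[y]) (group1 G).
have sxG : <[x]> \subset G by rewrite cycle_subG.
have nadj y : y \in G :\: <[x]> -> ~~ pg_adj G x y.
  case/setDP => yG yNx; apply/negP => /and4P[_ _ _ /orP[xy|yx]]; last first.
    by rewrite yx in yNx.
  suff eq_xy : <[x]> = <[y]> by rewrite eq_xy cycle_id in yNx.
  by apply/eqP; rewrite eqEcard cycle_subG xy [#|_| <= _]max_x.
have : #|G :\: <[x]>| <= #|pg_nonedges|.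
  rewrite -[#|G :\: _|]mul1n -(cards1 x); apply: setX_nonedges.
  - by rewrite disjoints1 !inE cycle_id.
  - by rewrite sub1set.
  - exact: subsetDl.
  - by move=> _ y /set1P->; apply: nadj.
rewrite cardsD (setIidPr sxG).
have ltxG : #|<[x]>| < #|G|.
  rewrite ltn_neqAle subset_leq_card // andbT.
  apply: contra ncycG => /eqP eq_xG; apply/cyclicP; exists x.
  by apply/esym/eqP; rewrite eqEcard sxG eq_xG /=.
have /dvdnP[k oG] : #|<[x]>| %| #|G| by exact: cardSg sxG.
have x_gt0 : 0 < #|<[x]>| by exact: cardG_gt0.
have k_gt1 : 1 < k by rewrite -(ltn_pmul2r x_gt0) mul1n -oG.
have : 2 * #|<[x]>| <= #|G| by rewrite oG leq_pmul2r.
lia.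
Qed.

Lemma TI_nonedges (H K : {group gT}) :
  H \subset G -> K \subset G -> H :&: K = 1 ->
  #|H|.-1 * #|K|.-1 <= #|pg_nonedges|.
Proof.
move=> sHG sKG tiHK.
have notin_other (L M : {group gT}) u : L :&: M = 1 -> u \in L :\ 1 -> u \notin M.
  move=> tiLM /setD1P[ntu uL]; apply: contra ntu => uM.
  have : u \in L :&: M by rewrite inE uL uM.
  by rewrite tiLM inE.
have tiKH : K :&: H = 1 by rewrite setIC.
rewrite (cardsD1 1 H) (cardsD1 1 K) !group1 /=; apply: setX_nonedges.
- rewrite disjoint_subset; apply/subsetP => u /(notin_other _ _ _ tiHK) uNK.
  by rewrite !inE (negbTE uNK) andbF.
- exact: subset_trans (subsetDl _ _) sHG.
- exact: subset_trans (subsetDl _ _) sKG.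
move=> h k hH1 kK1; apply/negP => /and4P[_ _ _ /orP[hk|kh]].
  move/negP: (notin_other _ _ _ tiHK hH1); apply; apply: (subsetP _ _ hk).
  by case/setD1P: kK1; rewrite cycle_subG.
move/negP: (notin_other _ _ _ tiKH kK1); apply; apply: (subsetP _ _ kh).
by case/setD1P: hH1; rewrite cycle_subG.
Qed.

Lemma solvable_nonedges pi : solvable G ->
  (#|G|`_pi).-1 * (#|G|`_pi^').-1 <= #|pg_nonedges|.
Proof.
move=> solG.
have [H hallH] := Hall_exists pi solG.
have [K hallK] := Hall_exists pi^' solG.
rewrite -(card_Hall hallH) -(card_Hall hallK).
apply: TI_nonedges; [exact: pHall_sub hallH | exact: pHall_sub hallK |].
by apply: coprime_TIg; rewrite (card_Hall hallH) (card_Hall hallK) coprime_partC.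
Qed.

Lemma cyclic_pgroup_pg_adj (p : nat) : cyclic G -> p.-group G ->
  {in G &, forall x y, x != y -> pg_adj G x y}.
Proof.
move=> cycG pG x y xG yG neq_xy; rewrite /pg_adj xG yG neq_xy.
have [i ox] := p_natP (mem_p_elt pG xG).
have [j oy] := p_natP (mem_p_elt pG yG).
have sxG : <[x]> \subset G by rewrite cycle_subG.
have syG : <[y]> \subset G by rewrite cycle_subG.
rewrite /= -[x \in _]cycle_subG -[y \in _]cycle_subG.
rewrite -(cardSg_cyclic cycG sxG syG) -(cardSg_cyclic cycG syG sxG).
change ((order x %| order y) || (order y %| order x)); rewrite ox oy.
by case: (leqP i j) => [ | /ltnW] /(dvdn_exp2l p) ->; rewrite ?orbT.
Qed.

Lemma cyclic_pgroup_nonedges (p : nat) :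
  cyclic G -> p.-group G -> pg_nonedges = set0.
Proof.
move=> cycG pG; apply/setP => A; rewrite in_set0; apply/negP.
rewrite !inE => /and3P[/negP nEA sAG /cards2P[x [y [neq_xy eA]]]]; apply: nEA.
rewrite eA subUset !sub1set in sAG *; case/andP: sAG => xG yG.
by rewrite mem_pg_edges (cyclic_pgroup_pg_adj cycG pG).
Qed.

End PowerGraphCounting.

Theorem mainTheorem1 (gT : finGroupType) (G : {group gT}) :
  pg_overfull G <->
  (cyclic G /\ exists p a : nat, [/\ prime p, odd p, 1 <= a & #|G| = p ^ a]).
Proof.
rewrite pg_overfullE; split.
  case/andP => oddG few_nonedges.
  have cycG : cyclic G.
    by apply: contraLR few_nonedges => /noncyclic_nonedges; rewrite -leqNgt; lia.
  have ntG : 1 < #|G| by lia.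
  have pr_p := pdiv_prime ntG; set p := pdiv #|G| in pr_p.
  have pG : (p.-group G)%g.
    rewrite -pgroupNK -partG_eq1; apply: contraLR few_nonedges => ntB.
    have := solvable_nonedges p (abelian_sol (cyclic_abelian cycG)).
    have odd_part (pi : nat_pred) : odd #|G|`_pi := dvdn_odd (dvdn_part _ _) oddG.
    have ntA : 1 < #|G|`_p by rewrite p_part_gt1 pi_pdiv.
    have := odd_mul_pred_le (odd_part p) (odd_part p^') ntA.
    rewrite ltn_neqAle part_gt0 eq_sym ntB partnC // => /(_ isT); lia.
  split=> //; exists p.
  have ntG1 : (G :!=: 1)%g by rewrite trivg_card1 neq_ltn ntG orbT.
  have [_ _ [m oG]] := pgroup_pdiv pG ntG1.
  by exists m.+1; rewrite oG (dvdn_odd (pdiv_dvd _) oddG).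
case=> cycG [p [a [pr_p odd_p a_gt0 oG]]].
have pG : (p.-group G)%g by rewrite /pgroup oG pnatX pnat_id.
rewrite (cyclic_pgroup_nonedges cycG pG) cards0 oG oddX odd_p orbT /=.
suff : 1 < p ^ a by lia.
by rewrite -{1}(expn0 p) ltn_exp2l ?prime_gt1.
Qed.
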